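(* Let $(\mathcal T,\{x_I\},\{r_I\})$ be a triple as below with $\mathcal T\subseteq\Sigma_N$ non-empty and closed and $s>0$. (a) If the triple is an $s$-tree (i.e. satisfies (T1)–(T5)), then it satisfies (T'3) with $E=1$. (b) Conversely, if the triple satisfies (T1), (T2), (T'3) (with some constant $E$), (T4), (T5), then there are numbers $\tilde r_I$, $I\in\mathcal T^*$, with $E^{-1/s}r_I\le\tilde r_I\le E^{1/s}r_I$ for all $I\in\mathcal T^*$, such that $(\mathcal T,\{x_I\},\{\tilde r_I\})$ satisfies (T1)–(T5) (with suitably modified constants), i.e. is an $s$-tree.
   Context: Words: $A_N=\{0,\dots,N-1\}$, $\Sigma_N=A_N^{\mathbb N}$ with product topology; for $\mathcal T\subseteq\Sigma_N$, $\mathcal T^*$ is the set of finite prefixes $\omega|_k$ ($k\ge0$) of elements of $\mathcal T$, $\mathcal T_k$ those of length $k$; $\prec$ is the prefix relation; $IJ$ concatenation; finite words $I,J$, $|I|\le|J|$, are incomparable if $I_k\ne J_k$ for some $k\le |I|$. Conditions for $x_I\in X$ ($X$ metric space), $0<r_I<\infty$, with constants $\rho,C,D\in(0,\infty)$: (T1) $d(x_I,x_J)\ge C(r_I+r_J)$ for incomparable $I,J\in\mathcal T^*$; (T2) $\operatorname{diam}\{x_{IJ}:IJ\in\mathcal T^*\}\le Dr_I$; (T3) $\sum_{|J|=n,\,IJ\in\mathcal T^*}r_{IJ}^s=r_I^s$ for all $I\in\mathcal T^*$, $n\ge0$; (T4) $r_I\to0$ as $|I|\to\infty$; (T5) $r_{Ij}\ge\rho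 r_I$ whenever $j\in A_N$, $Ij\in\mathcal T^*$. For $I\in\mathcal T^*$ and $n\ge0$ let $\mathcal T^n_I$ be the collection of all sets $\mathcal I\subseteq\bigcup_{k\ge n}\mathcal T_k$ such that every $\omega\in\mathcal T$ has exactly one $J\in\mathcal I$ with $J\prec\omega$, and some $J\in\mathcal I$ satisfies $I\prec J$. (T'3): there is $0<E<\infty$ such that for all $I\in\mathcal T^*$, $n\ge0$ and $\mathcal I\in\mathcal T^n_I$, $\frac1E r_I^s\le\sum_{J:\,IJ\in\mathcal I}r_{IJ}^s\le Er_I^s$. *)

From Stdlib Require Import Reals List.
Import ListNotations.
Open Scope R_scope.

Definition inSigma (N : nat) (w : nat -> nat) : Prop := forall k, (w k < N)%nat.

Definition pre (w : nat -> nat) (k : nat) : list nat := map w (seq 0 k).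

(* T closed in the product topology: the complement is open, i.e. every
   w in Sigma_N \ T has a cylinder neighbourhood [w|_k] disjoint from T. *)
Definition closedT (N : nat) (T : (nat -> nat) -> Prop) : Prop :=
  forall w, inSigma N w -> ~ T w ->
    exists k, forall v, inSigma N v -> pre v k = pre w k -> ~ T v.

Definition Tstar (T : (nat -> nat) -> Prop) (I : list nat) : Prop :=
  exists w k, T w /\ I = pre w k.

Definition prefw (J : list nat) (w : nat -> nat) : Prop := pre w (length J) = J.

Definition prefl (I J : list nat) : Prop := exists K, J = I ++ K.

Definition incomparable (I J : list nat) : Prop :=
  exists k, (k < length I)%nat /\ (k < length J)%nat /\ nth k I 0%nat <> nth k J 0%nat.

Definition is_metric {X : Type} (d : X -> X -> R) : Prop :=
  (forall x y, 0 <= d x y) /\ (forall x y, d x y = 0 <-> x = y) /\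
  (forall x y, d x y = d y x) /\ (forall x y z, d x z <= d x y + d y z).

Fixpoint lsum (f : list nat -> R) (l : list (list nat)) : R :=
  match l with [] => 0 | a :: l' => f a + lsum f l' end.

(* psum P f S : S is the (possibly infinite) sum of the nonnegative family
   f over {J | P J}, i.e. the supremum of its finite partial sums. *)
Definition psum (P : list nat -> Prop) (f : list nat -> R) (S : R) : Prop :=
  is_lub (fun y => exists l, NoDup l /\ (forall J, In J l -> P J) /\ y = lsum f l) S.

Section Conds.
Variables (T : (nat -> nat) -> Prop) (X : Type) (d : X -> X -> R)
          (x : list nat -> X) (r : list nat -> R) (s : R).

Definition T1 (C : R) : Prop :=
  forall I J, Tstar T I -> Tstar T J -> incomparable I J ->
    d (x I) (x J) >= C * (r I + r J).

Definition T2 (D : R) : Prop :=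
  forall I J1 J2, Tstar T I -> Tstar T (I ++ J1) -> Tstar T (I ++ J2) ->
    d (x (I ++ J1)) (x (I ++ J2)) <= D * r I.

Definition T3 : Prop :=
  forall I n, Tstar T I ->
    psum (fun J => length J = n /\ Tstar T (I ++ J))
         (fun J => Rpower (r (I ++ J)) s) (Rpower (r I) s).

Definition T4 : Prop :=
  forall eps, 0 < eps -> exists n, forall I, Tstar T I -> (n <= length I)%nat -> r I < eps.

Definition T5 (N : nat) (rho : R) : Prop :=
  forall I j, (j < N)%nat -> Tstar T (I ++ [j]) -> r (I ++ [j]) >= rho * r I.

Definition cutset (n : nat) (I : list nat) (Ic : list nat -> Prop) : Prop :=
  (forall J, Ic J -> Tstar T J /\ (n <= length J)%nat) /\
  (forall w, T w -> exists J, Ic J /\ prefw J w /\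
                  forall J', Ic J' -> prefw J' w -> J' = J) /\
  (exists J, Ic J /\ prefl I J).

Definition T'3 (E : R) : Prop :=
  forall I n Ic, Tstar T I -> cutset n I Ic ->
    exists S, psum (fun J => Ic (I ++ J)) (fun J => Rpower (r (I ++ J)) s) S /\
      / E * Rpower (r I) s <= S /\ S <= E * Rpower (r I) s.

Definition s_tree (N : nat) : Prop :=
  (forall I, Tstar T I -> 0 < r I) /\
  exists rho C D, 0 < rho /\ 0 < C /\ 0 < D /\
    T1 C /\ T2 D /\ T3 /\ T4 /\ T5 N rho.
End Conds.

(** Write [w_I = r_I^s].  The proof works with weights on finite words.

   (a) By (T3) with one letter, [w] restricted to [T^*] (and 0 elsewhere) is
   additive: its value at [K] is the sum over the children [K j].  An additive
   weight gives at most [w_I] to any antichain above [I] ([antichain_bound]);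
   conversely, by König's lemma (compactness of [T]) every cut of [T^n_I]
   lies below a finite level, whose total weight is [w_I] ([cut_finite_sum_ge]).
   Hence every cut sums to exactly [w_I], which is (T'3) with [E = 1].

   (b) Let [cover_inf n I] be the least [w]-cost of a finite cover of the
   branches through [I] by words of [T^*] of length at least [n].  Covers and
   cuts are interconvertible, so (T'3) gives [E^-1 w_I <= cover_inf n I <= E w_I];
   [cover_inf n] is nondecreasing in [n] and additive at words shorter than [n].
   Its limit [g] is therefore additive and comparable to [w], so the radii
   [g_I^(1/s)] satisfy (T3) and lie between [E^(-1/s) r_I] and [E^(1/s) r_I];
   conditions (T1), (T2), (T4), (T5) survive such a comparable change of radii. *)

From Pilot Require Import Defs.
From Stdlib Require Import Reals List Lra Lia ClassicalEpsilon Classical FinFun.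
Import ListNotations.
Open Scope R_scope.

(* Stdlib's Reals also exports a [pre] (for step functions). *)
Local Notation pre := Defs.pre.

Fixpoint fsum {A} (f : A -> R) (l : list A) : R :=
  match l with [] => 0 | a :: l' => f a + fsum f l' end.

Lemma lsum_fsum f l : lsum f l = fsum f l.
Proof. induction l; simpl; auto; rewrite IHl; auto. Qed.

Lemma fsum_app {A} (f : A -> R) l1 l2 : fsum f (l1 ++ l2) = fsum f l1 + fsum f l2.
Proof. induction l1; simpl; [lra|rewrite IHl1; lra]. Qed.

Lemma fsum_map {A B} (f : B -> R) (g : A -> B) l : fsum f (map g l) = fsum (fun a => f (g a)) l.
Proof. induction l; simpl; auto; rewrite IHl; auto. Qed.

Lemma fsum_flat_map {A B} (f : B -> R) (g : A -> list B) l :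
  fsum f (flat_map g l) = fsum (fun a => fsum f (g a)) l.
Proof. induction l; simpl; auto; rewrite fsum_app, IHl; auto. Qed.

Lemma fsum_ext {A} (f g : A -> R) l : (forall a, In a l -> f a = g a) -> fsum f l = fsum g l.
Proof. induction l; simpl; intros H; auto. rewrite H, IHl; auto. Qed.

Lemma fsum_le {A} (f g : A -> R) l : (forall a, In a l -> f a <= g a) -> fsum f l <= fsum g l.
Proof.
  induction l; simpl; intros H; [lra|].
  pose proof (H a (or_introl eq_refl)). pose proof (IHl (fun x h => H x (or_intror h))). lra.
Qed.

Lemma fsum_zero {A} (l : list A) : fsum (fun _ => 0) l = 0.
Proof. induction l; simpl; auto; lra. Qed.

Lemma fsum_nonneg {A} (f : A -> R) l : (forall a, In a l -> 0 <= f a) -> 0 <= fsum f l.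
Proof. intros H. rewrite <- (fsum_zero l). apply fsum_le; auto. Qed.

Lemma fsum_plus {A} (f g : A -> R) l : fsum (fun a => f a + g a) l = fsum f l + fsum g l.
Proof. induction l; simpl; [lra|rewrite IHl; lra]. Qed.

Lemma fsum_remove {A} (dec : forall x y : A, {x = y} + {x <> y}) (f : A -> R) x b :
  (forall y, In y b -> 0 <= f y) -> (In x b -> f x + fsum f (remove dec x b) <= fsum f b) /\
  fsum f (remove dec x b) <= fsum f b.
Proof.
  induction b as [|y b IH]; simpl; intros H; [split; [tauto|lra]|].
  pose proof (H y (or_introl eq_refl)) as Hy.
  destruct (IH (fun z h => H z (or_intror h))) as [IH1 IH2].
  destruct (dec x y) as [->|n]; simpl; split; try lra.
  intros [->|Hin]; [congruence|]. pose proof (IH1 Hin). lra.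
Qed.

Lemma fsum_incl {A} (dec : forall x y : A, {x = y} + {x <> y}) (f : A -> R) (a b : list A) :
  NoDup a -> (forall x, In x b -> 0 <= f x) ->
  (forall x, In x a -> f x <> 0 -> In x b) -> fsum f a <= fsum f b.
Proof.
  revert b. induction a as [|x a IH]; simpl; intros b Hnd Hb Hinc.
  - apply fsum_nonneg; auto.
  - inversion Hnd; subst.
    destruct (Req_dec (f x) 0) as [E|E].
    + rewrite E. assert (fsum f a <= fsum f b); [apply IH; auto|lra].
    + pose proof (proj1 (fsum_remove dec f x b Hb) (Hinc x (or_introl eq_refl) E)).
      assert (fsum f a <= fsum f (remove dec x b)); [|lra].
      apply IH; auto.
      * intros y Hy. apply Hb. apply in_remove in Hy. tauto.
      * intros y Hy Hfy. apply in_in_remove; [intros ->; contradiction|auto].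
Qed.

Definition asbool (P : Prop) : bool := if excluded_middle_informative P then true else false.

Lemma asbool_true P : asbool P = true <-> P.
Proof. unfold asbool. destruct (excluded_middle_informative P); split; auto; discriminate. Qed.

Lemma fsum_filter {A} (g : A -> R) (p : A -> bool) l :
  (forall a, In a l -> p a = false -> g a = 0) -> fsum g (filter p l) = fsum g l.
Proof.
  induction l as [|a l IH]; simpl; intros H; auto.
  destruct (p a) eqn:E; simpl; rewrite IH; auto. rewrite (H a); auto. lra.
Qed.

Lemma fsum_indicator c v N : (c < N)%nat ->
  fsum (fun j => if Nat.eqb c j then v else 0) (seq 0 N) = v.
Proof.
  intros H. replace N with (c + (1 + (N - c - 1)))%nat by lia.
  rewrite !seq_app, !fsum_app. simpl. rewrite Nat.eqb_refl.
  assert (Hoff : forall a n, (c < a \/ a + n <= c)%nat ->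
    fsum (fun j => if Nat.eqb c j then v else 0) (seq a n) = 0).
  { intros a n Ha. transitivity (fsum (fun _ => 0) (seq a n)); [|apply fsum_zero].
    apply fsum_ext.
    intros j Hj. apply in_seq in Hj. destruct (Nat.eqb c j) eqn:E; auto.
    apply Nat.eqb_eq in E. lia. }
  rewrite !Hoff by lia. lra.
Qed.

Lemma fsum_partition (f : list nat -> R) p N l :
  (forall K, In K l -> (nth p K 0%nat < N)%nat) ->
  fsum f l = fsum (fun j => fsum f (filter (fun K => Nat.eqb (nth p K 0%nat) j) l)) (seq 0 N).
Proof.
  induction l as [|K l IH]; simpl; intros H.
  - symmetry. apply fsum_zero.
  - transitivity (fsum (fun j => (if Nat.eqb (nth p K 0%nat) j then f K else 0) +
        fsum f (filter (fun K0 => Nat.eqb (nth p K0 0%nat) j) l)) (seq 0 N)).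
    + rewrite fsum_plus, fsum_indicator by auto. rewrite IH by auto. reflexivity.
    + apply fsum_ext. intros j _. destruct (Nat.eqb (nth p K 0%nat) j); simpl; lra.
Qed.

Lemma NoDup_flat_map_disjoint {A B} (g : A -> list B) l :
  NoDup l -> (forall a, In a l -> NoDup (g a)) ->
  (forall a b y, In a l -> In b l -> In y (g a) -> In y (g b) -> a = b) ->
  NoDup (flat_map g l).
Proof.
  induction l as [|a l IH]; simpl; intros Hnd Hg Hdis; [constructor|].
  inversion Hnd; subst. apply NoDup_app.
  - apply Hg; auto.
  - apply IH; auto. intros a0 b y ? ? ? ?; eapply Hdis; eauto.
  - intros y Hy1 Hy2. apply in_flat_map in Hy2 as [b [Hb Hyb]].
    assert (a = b) by (eapply Hdis; eauto). subst; contradiction.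
Qed.

Definition word_eq_dec := list_eq_dec Nat.eq_dec.

Lemma psum_unique P f S1 S2 : psum P f S1 -> psum P f S2 -> S1 = S2.
Proof.
  unfold psum, is_lub. intros [H1 H1'] [H2 H2']. apply Rle_antisym; [apply H1'|apply H2']; auto.
Qed.

Lemma psum_finite (P : list nat -> Prop) f g A :
  NoDup A -> (forall J, P J -> In J A) -> (forall J, In J A -> 0 <= g J) ->
  (forall J, P J -> g J = f J) -> (forall J, In J A -> ~ P J -> g J = 0) ->
  psum P f (fsum g A).
Proof.
  intros Hnd HPA Hg Hgf Hz. split.
  - intros y [l [Hl [HlP ->]]]. rewrite lsum_fsum.
    rewrite (fsum_ext f g) by (intros; symmetry; auto).
    apply (fsum_incl word_eq_dec); auto.
  - intros b Hb. apply Hb. exists (filter (fun J => asbool (P J)) A).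
    split; [apply NoDup_filter; auto|split].
    + intros J HJ. apply filter_In in HJ as [_ HJ]. apply asbool_true; auto.
    + rewrite lsum_fsum, (fsum_ext f g).
      * symmetry. apply fsum_filter. intros a Ha Hp. apply Hz; auto.
        intro HP. apply asbool_true in HP. congruence.
      * intros J HJ. apply filter_In in HJ as [_ HJ]. symmetry; apply Hgf. apply asbool_true; auto.
Qed.

Definition is_inf (A : R -> Prop) m :=
  (forall y, A y -> m <= y) /\ (forall m', (forall y, A y -> m' <= y) -> m' <= m).

Lemma inf_exists A : (exists y, A y) -> (forall y, A y -> 0 <= y) -> exists m, is_inf A m.
Proof.
  intros [y0 Hy0] Hnn.
  destruct (completeness (fun z => A (- z))) as [L [HL1 HL2]].
  - exists 0. intros z Hz. specialize (Hnn _ Hz). lra.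
  - exists (- y0). rewrite Ropp_involutive; auto.
  - unfold is_upper_bound in *. exists (- L). split.
    + intros y Hy. assert (- y <= L) by (apply HL1; rewrite Ropp_involutive; auto). lra.
    + intros m' Hm'. assert (L <= - m'); [|lra]. apply HL2. intros z Hz. specialize (Hm' _ Hz). lra.
Qed.

Lemma inf_approx A m e : is_inf A m -> 0 < e -> exists y, A y /\ y < m + e.
Proof.
  intros [_ Hm] He. apply NNPP; intro Hno.
  assert (m + e <= m); [|lra].
  apply Hm. intros y Hy. apply Rnot_lt_le. intro. apply Hno. eauto.
Qed.

Lemma le_of_le_plus_eps a b c : 0 <= c -> (forall e, 0 < e -> a <= b + c * e) -> a <= b.
Proof.
  intros Hc H. apply Rnot_lt_le. intro Hlt.
  set (e := (a - b) / (2 * (c + 1))).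
  assert (He : 0 < e) by (unfold e; apply Rdiv_lt_0_compat; lra).
  assert (E2 : (c + 1) * e = (a - b) / 2) by (unfold e; field; lra).
  pose proof (H e He). nra.
Qed.

Definition is_sup_seq (a : nat -> R) (x : R) : Prop :=
  (forall n, a n <= x) /\ (forall e, 0 < e -> exists n, x - e < a n).

Definition nondecr (a : nat -> R) := forall n, a n <= a (S n).

Lemma nondecr_le a : nondecr a -> forall n m, (n <= m)%nat -> a n <= a m.
Proof.
  intros H n m Hnm. replace m with (n + (m - n))%nat by lia. generalize (m - n)%nat as k.
  induction k; [rewrite Nat.add_0_r; lra|]. rewrite Nat.add_succ_r. specialize (H (n + k)%nat). lra.
Qed.

Lemma sup_seq_unique a x y : is_sup_seq a x -> is_sup_seq a y -> x = y.
Proof.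
  intros [H1 H2] [H3 H4]. apply Rle_antisym; apply Rnot_lt_le; intro Hl.
  - destruct (H2 (x - y)) as [n Hn]; [lra|]. specialize (H3 n). lra.
  - destruct (H4 (y - x)) as [n Hn]; [lra|]. specialize (H1 n). lra.
Qed.

Lemma sup_seq_exists a B : (forall n, a n <= B) -> exists x, is_sup_seq a x.
Proof.
  intros HB. destruct (completeness (fun y => exists n, y = a n)) as [L [HL1 HL2]].
  - exists B. intros y [n ->]. auto.
  - exists (a 0%nat), 0%nat; auto.
  - unfold is_upper_bound in *. exists L. split.
    + intros n. apply HL1. eauto.
    + intros e He. apply NNPP. intro Hn. assert (L <= L - e); [|lra].
      apply HL2. intros y [n ->]. apply Rnot_lt_le. intro. apply Hn. eauto.
Qed.

Lemma sup_seq_shift a x k : nondecr a -> is_sup_seq a x -> is_sup_seq (fun n => a (n + k)%nat) x.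
Proof.
  intros Hm [H1 H2]. split; auto. intros e He. destruct (H2 e He) as [n Hn]. exists n.
  pose proof (nondecr_le a Hm n (n + k) ltac:(lia)). lra.
Qed.

Lemma sup_seq_ext a b x : (forall n, a n = b n) -> is_sup_seq a x -> is_sup_seq b x.
Proof.
  intros E [H1 H2]. split; [intros n; rewrite <- E; auto|].
  intros e He. destruct (H2 e He) as [n Hn]. exists n. rewrite <- E; auto.
Qed.

Lemma sup_seq_const c : is_sup_seq (fun _ => c) c.
Proof. split; [intros; lra|]. intros e He. exists 0%nat. lra. Qed.

Lemma sup_seq_plus a b x y : nondecr a -> nondecr b -> is_sup_seq a x -> is_sup_seq b y ->
  is_sup_seq (fun n => a n + b n) (x + y).
Proof.
  intros Ha Hb [H1 H2] [H3 H4]. split; [intros n; specialize (H1 n); specialize (H3 n); lra|].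
  intros e He. destruct (H2 (e / 2)) as [n1 Hn1]; [lra|]. destruct (H4 (e / 2)) as [n2 Hn2]; [lra|].
  exists (Nat.max n1 n2).
  pose proof (nondecr_le a Ha n1 (Nat.max n1 n2) ltac:(lia)).
  pose proof (nondecr_le b Hb n2 (Nat.max n1 n2) ltac:(lia)). lra.
Qed.

Lemma sup_seq_fsum {A} (a : A -> nat -> R) (x : A -> R) L :
  (forall j, nondecr (a j)) -> (forall j, is_sup_seq (a j) (x j)) ->
  is_sup_seq (fun n => fsum (fun j => a j n) L) (fsum x L).
Proof.
  intros Hm Hs. induction L as [|j L IH]; simpl.
  - apply sup_seq_const.
  - apply sup_seq_plus; auto. intros n. apply fsum_le. intros; apply Hm.
Qed.

Lemma pre_length w k : length (pre w k) = k.
Proof. unfold pre. rewrite length_map, length_seq. auto. Qed.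

Lemma pre_add w a b : pre w (a + b) = pre w a ++ map w (seq a b).
Proof. unfold pre. rewrite seq_app, map_app. reflexivity. Qed.

Lemma pre_S w k : pre w (S k) = pre w k ++ [w k].
Proof. replace (S k) with (k + 1)%nat by lia. rewrite pre_add. reflexivity. Qed.

Lemma nth_pre w k i : (i < k)%nat -> nth i (pre w k) 0%nat = w i.
Proof.
  intros. rewrite (nth_indep _ _ (w 0%nat)) by (rewrite pre_length; lia).
  unfold pre. rewrite map_nth, seq_nth; auto.
Qed.

Lemma app_same_length {A} (a b c d : list A) :
  a ++ b = c ++ d -> length a = length c -> a = c /\ b = d.
Proof.
  intros H L. apply app_eq_app in H as [l [[H1 H2]|[H1 H2]]]; subst;
  rewrite length_app in L; destruct l; simpl in *; try lia; rewrite app_nil_r; auto.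
Qed.

Lemma prefw_pre w k : prefw (pre w k) w.
Proof. unfold prefw. rewrite pre_length. auto. Qed.

Lemma prefl_pre w a b : (a <= b)%nat -> prefl (pre w a) (pre w b).
Proof.
  intros H. exists (map w (seq a (b - a))). replace b with (a + (b - a))%nat at 1 by lia.
  apply pre_add.
Qed.

Lemma prefl_len I K : prefl I K -> (length I <= length K)%nat.
Proof. intros [Y ->]. rewrite length_app. lia. Qed.

Lemma prefl_eq I K : prefl I K -> (length K <= length I)%nat -> K = I.
Proof. intros [Y ->] H. rewrite length_app in H. destruct Y; simpl in *; [apply app_nil_r|lia]. Qed.

Lemma prefl_app I J : prefl I (I ++ J).
Proof. exists J; auto. Qed.

Lemma prefl_trans I J K : prefl I J -> prefl J K -> prefl I K.
Proof. intros [Y ->] [Z ->]. exists (Y ++ Z). rewrite app_assoc; auto. Qed.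

Lemma prefl_comparable a b K : prefl a K -> prefl b K -> prefl a b \/ prefl b a.
Proof.
  intros [Y HY] [Z HZ]. rewrite HY in HZ. apply app_eq_app in HZ as [l [[H1 _]|[H1 _]]].
  - right. exists l; auto.
  - left. exists l; auto.
Qed.

Lemma prefl_snoc K j K2 : prefl K K2 -> (length K < length K2)%nat ->
  nth (length K) K2 0%nat = j -> prefl (K ++ [j]) K2.
Proof.
  intros [Y ->] L H. rewrite length_app in L. destruct Y as [|y Y]; simpl in L; [lia|].
  rewrite nth_middle in H. subst. exists Y. rewrite <- app_assoc. auto.
Qed.

Lemma prefw_prefl I K w : prefl I K -> prefw K w -> prefw I w.
Proof.
  intros [Y ->] H. unfold prefw in *. rewrite length_app, pre_add in H.
  apply app_same_length in H as [H _]; auto. apply pre_length.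
Qed.

Lemma prefw_comparable J K w : prefw J w -> prefw K w -> (length J <= length K)%nat -> prefl J K.
Proof. unfold prefw. intros H1 H2 L. rewrite <- H1, <- H2. apply prefl_pre; auto. Qed.

Lemma prefw_same_length J K w : prefw J w -> prefw K w -> length J = length K -> J = K.
Proof. unfold prefw. intros H1 H2 L. rewrite <- H1, <- H2, L. auto. Qed.

Fixpoint words (N k : nat) : list (list nat) :=
  match k with
  | O => [[]]
  | S k => flat_map (fun J => map (fun j => J ++ [j]) (seq 0 N)) (words N k)
  end.

Lemma in_words N k J : In J (words N k) <-> length J = k /\ (forall i, In i J -> (i < N)%nat).
Proof.
  revert J; induction k as [|k IH]; intros J; simpl.
  - split.
    + intros [<-|[]]. simpl. split; auto. intros _ [].
    + intros [L _]. destruct J; simpl in L; [auto|lia].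
  - rewrite in_flat_map. split.
    + intros [J0 [HJ0 Hin]]. apply in_map_iff in Hin as [j [<- Hj]].
      apply in_seq in Hj. apply IH in HJ0 as [L H]. rewrite length_app. simpl.
      split; [lia|]. intros i Hi. apply in_app_or in Hi as [Hi|[<-|[]]]; auto; lia.
    + intros [L H]. destruct J as [|a J']; [simpl in L; lia|].
      destruct (exists_last (l := a :: J') ltac:(discriminate)) as [J0 [j E]].
      rewrite E in *. exists J0. rewrite length_app in L. simpl in L. split.
      * apply IH. split; [lia|]. intros i Hi. apply H. apply in_or_app; auto.
      * apply in_map_iff. exists j. split; auto. apply in_seq.
        assert (j < N)%nat by (apply H; apply in_or_app; simpl; auto). lia.
Qed.

Lemma words_NoDup N k : NoDup (words N k).
Proof.
  induction k as [|k IH]; simpl.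
  - constructor; [intros []|constructor].
  - apply NoDup_flat_map_disjoint; auto.
    + intros a _. apply Injective_map_NoDup; [|apply seq_NoDup].
      intros y z H. apply app_inj_tail in H. tauto.
    + intros a b y _ _ H1 H2. apply in_map_iff in H1 as [z [<- _]].
      apply in_map_iff in H2 as [u [E _]]. apply app_inj_tail in E. symmetry; tauto.
Qed.

Lemma map_app_NoDup (I : list nat) l : NoDup l -> NoDup (map (fun J => I ++ J) l).
Proof. apply Injective_map_NoDup. intros a b E. apply app_inv_head in E. auto. Qed.

(** Additive functions on words: the value at [K] is the sum of the values at
    the children [K j], [j < N]. They are the finitely additive measures on
    cylinders of [Sigma_N]. *)
Definition additive (N : nat) (phi : list nat -> R) : Prop :=
  forall K, phi K = fsum (fun j => phi (K ++ [j])) (seq 0 N).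

Section Additive.
Variables (N : nat) (phi : list nat -> R).
Hypothesis phi_additive : additive N phi.

Lemma level_sum m K : fsum (fun J => phi (K ++ J)) (words N m) = phi K.
Proof.
  induction m as [|m IH] in K |- *; simpl.
  - rewrite app_nil_r. lra.
  - rewrite fsum_flat_map. rewrite <- (IH K). apply fsum_ext. intros J _.
    rewrite fsum_map. rewrite (phi_additive (K ++ J)). apply fsum_ext.
    intros j _. rewrite app_assoc. auto.
Qed.

Hypothesis phi_nonneg : forall K, 0 <= phi K.
Hypothesis phi_support : forall K, phi K <> 0 -> forall i, In i K -> (i < N)%nat.

(* An antichain of extensions of [I] carries at most the mass of [I]: extend
   every element to a common length [M] and compare with the level sum of [I]. *)
Lemma antichain_bound I A : NoDup A -> (forall a, In a A -> prefl I a) ->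
  (forall a b, In a A -> In b A -> prefl a b -> a = b) -> fsum phi A <= phi I.
Proof.
  intros Hnd HI Hac.
  set (M := (list_max (map (@length nat) A) + length I)%nat).
  assert (HM : forall a, In a A -> (length a <= M)%nat).
  { intros a Ha. pose proof (proj1 (list_max_le _ _) (le_n (list_max (map (@length nat) A))))
      as F. rewrite Forall_forall in F. specialize (F _ (in_map _ _ _ Ha)). unfold M. lia. }
  transitivity (fsum phi (flat_map (fun a => map (fun J => a ++ J) (words N (M - length a))) A)).
  - rewrite fsum_flat_map. apply Req_le. apply fsum_ext. intros a _. rewrite fsum_map.
    symmetry. apply level_sum.
  - rewrite <- (level_sum (M - length I) I), <- (fsum_map phi (fun J => I ++ J)).
    apply (fsum_incl word_eq_dec); auto.
    + apply NoDup_flat_map_disjoint; auto.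
      * intros a _. apply map_app_NoDup, words_NoDup.
      * intros a b y Ha Hb H1 H2.
        apply in_map_iff in H1 as [J1 [E1 _]]. apply in_map_iff in H2 as [J2 [E2 _]].
        assert (Pa : prefl a y) by (exists J1; auto).
        assert (Pb : prefl b y) by (exists J2; auto).
        destruct (prefl_comparable a b y Pa Pb) as [P|P]; [|symmetry]; apply Hac; auto.
    + intros y Hy Hnz. apply in_flat_map in Hy as [a [Ha Hy]].
      apply in_map_iff in Hy as [J [<- HJ]]. apply in_words in HJ as [LJ _].
      destruct (HI a Ha) as [Y ->]. pose proof (HM _ Ha).
      apply in_map_iff. exists (Y ++ J). rewrite app_assoc. split; auto.
      apply in_words. split.
      * rewrite length_app in *. lia.
      * intros i Hi. apply (phi_support _ Hnz). rewrite <- app_assoc. apply in_or_app; auto.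
Qed.
End Additive.

Section Tree.
Variables (N : nat) (T : (nat -> nat) -> Prop).
Hypothesis T_in_Sigma : forall w, T w -> inSigma N w.

Lemma Tstar_iff I : Tstar T I <-> exists w, T w /\ prefw I w.
Proof.
  split.
  - intros [w [k [Hw ->]]]. exists w. split; auto. apply prefw_pre.
  - intros [w [Hw H]]. exists w, (length I). split; auto.
Qed.

Lemma Tstar_pre w k : T w -> Tstar T (pre w k).
Proof. intros Hw. exists w, k. auto. Qed.

Lemma Tstar_prefl I K : Tstar T K -> prefl I K -> Tstar T I.
Proof.
  intros H P. apply Tstar_iff in H as [w [Hw H]]. apply Tstar_iff. exists w. split; auto.
  eapply prefw_prefl; eauto.
Qed.

Lemma Tstar_letters K : Tstar T K -> forall i, In i K -> (i < N)%nat.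
Proof.
  intros [w [k [Hw ->]]] i Hi. unfold pre in Hi. apply in_map_iff in Hi as [m [<- _]].
  apply T_in_Sigma; auto.
Qed.

Definition level (I : list nat) (k : nat) : list (list nat) :=
  filter (fun J => asbool (Tstar T (I ++ J))) (words N k).

Lemma level_NoDup I k : NoDup (level I k).
Proof. apply NoDup_filter, words_NoDup. Qed.

Lemma in_level I k J : In J (level I k) <-> Tstar T (I ++ J) /\ length J = k.
Proof.
  unfold level. rewrite filter_In, asbool_true, in_words. split; [tauto|].
  intros [TJ LJ]. repeat split; auto. intros i Hi. apply (Tstar_letters _ TJ).
  apply in_or_app; auto.
Qed.

Lemma cut_antichain n I Ic a b : cutset T n I Ic -> Ic a -> Ic b -> prefl a b -> a = b.
Proof.
  intros [Hel [Hcov _]] Ha Hb P.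
  destruct (Hel b Hb) as [Tb _]. apply Tstar_iff in Tb as [w [Hw Pw]].
  destruct (Hcov w Hw) as [J [HJ [_ Hu]]].
  rewrite (Hu a Ha), (Hu b Hb); auto. eapply prefw_prefl; eauto.
Qed.

(* An element of a cut of [T^n_I] lying below an extension of [I] extends [I]:
   otherwise it would be a strict prefix of the element of the cut above [I]. *)
Lemma cut_extends n I Ic K' K : cutset T n I Ic -> Ic K' -> prefl K' K -> prefl I K -> prefl I K'.
Proof.
  intros HC HK' P1 P2. destruct (prefl_comparable K' I K P1 P2) as [P|P]; auto.
  destruct HC as [Hel [Hcov [J0 [HJ0 PJ0]]]].
  destruct (Hel J0 HJ0) as [TJ0 _]. apply Tstar_iff in TJ0 as [w [Hw Pw]].
  destruct (Hcov w Hw) as [J1 [_ [_ Hu]]].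
  assert (K' = J0).
  { rewrite (Hu K' HK'), (Hu J0 HJ0); auto. eapply prefw_prefl; [|eauto].
    eapply prefl_trans; eauto. }
  subst. exists []. rewrite app_nil_r. apply prefl_eq; auto. apply prefl_len; auto.
Qed.

(** König's lemma: by compactness of [T], a family of words meeting every
    branch of [T] already meets every branch before some finite depth. *)

Definition escapes (Ic : list nat -> Prop) K : Prop :=
  forall m, exists K2, Tstar T K2 /\ prefl K K2 /\ (m <= length K2)%nat /\
    forall K', Ic K' -> ~ prefl K' K2.

Lemma uniform_bound (Q : nat -> nat -> Prop) :
  (forall j, (j < N)%nat -> exists m, Q j m) ->
  (forall j m m', Q j m -> (m <= m')%nat -> Q j m') ->
  exists M, forall j, (j < N)%nat -> Q j M.
Proof.
  intros H Hup. clear T_in_Sigma. induction N as [|N' IH].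
  - exists 0%nat. intros; lia.
  - destruct IH as [M HM]; [intros; apply H; lia|].
    destruct (H N' ltac:(lia)) as [m Hm].
    exists (Nat.max M m). intros j Hj.
    destruct (Nat.eq_dec j N') as [->|ne].
    + eapply Hup; eauto; lia.
    + eapply Hup; [apply HM; lia|lia].
Qed.

Lemma escapes_step Ic K : escapes Ic K -> exists j, (j < N)%nat /\ escapes Ic (K ++ [j]).
Proof.
  intros Hb. apply NNPP. intros Hn.
  assert (H : forall j, (j < N)%nat -> exists m, forall K2, Tstar T K2 -> prefl (K ++ [j]) K2 ->
     (m <= length K2)%nat -> exists K', Ic K' /\ prefl K' K2).
  { intros j Hj. apply NNPP. intros H1. apply Hn. exists j. split; auto.
    intros m. apply NNPP. intros H2. apply H1. exists m. intros K2 T2 P2 L2.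
    apply NNPP. intros H3. apply H2. exists K2. repeat split; auto.
    intros K' HK' PK'. apply H3. exists K'; auto. }
  destruct (uniform_bound _ H) as [M HM].
  { intros j m m' Hq Hle K2 T2 P2 L2. apply Hq; auto; lia. }
  destruct (Hb (Nat.max M (S (length K)))) as [K2 [T2 [P2 [L2 H2]]]].
  set (j := nth (length K) K2 0%nat).
  assert (Hj : (j < N)%nat) by (apply (Tstar_letters K2 T2), nth_In; lia).
  destruct (HM j Hj K2 T2) as [K' [HK' PK']].
  - apply prefl_snoc; auto. lia.
  - lia.
  - exact (H2 K' HK' PK').
Qed.

Lemma escaping_branch Ic : escapes Ic [] ->
  exists w, inSigma N w /\ forall k, escapes Ic (pre w k).
Proof.
  intros H0.
  set (step := fun K => epsilon (inhabits 0%nat)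
                          (fun j => (j < N)%nat /\ escapes Ic (K ++ [j]))).
  assert (Hstep : forall K, escapes Ic K -> (step K < N)%nat /\ escapes Ic (K ++ [step K])).
  { intros K HK. unfold step. apply epsilon_spec. apply escapes_step; auto. }
  set (path := fix path k := match k with O => [] | S k => path k ++ [step (path k)] end).
  assert (Hp : forall k, escapes Ic (path k)) by (induction k; simpl; auto; apply Hstep; auto).
  set (w := fun k => step (path k)).
  assert (Hpre : forall k, pre w k = path k).
  { induction k; auto. rewrite pre_S, IHk. reflexivity. }
  exists w. split.
  - intros k. apply Hstep, Hp.
  - intros k. rewrite Hpre. apply Hp.
Qed.

Hypothesis T_closed : closedT N T.

Lemma cut_finite_depth (Ic : list nat -> Prop) :
  (forall w, T w -> exists J, Ic J /\ prefw J w) ->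
  exists m, forall K, Tstar T K -> length K = m -> exists K', Ic K' /\ prefl K' K.
Proof.
  intros Hcov. apply NNPP. intros Hn.
  assert (B0 : escapes Ic []).
  { intros m. apply NNPP. intros H1. apply Hn. exists m. intros K TK LK.
    apply NNPP. intros H2. apply H1. exists K. repeat split; auto.
    - exists K; auto.
    - lia.
    - intros K' HK' PK'. apply H2. exists K'; auto. }
  destruct (escaping_branch Ic B0) as [w [Hw Hp]].
  (* the escaping branch lies in the closed set [T] ... *)
  assert (HwT : T w).
  { apply NNPP. intros Hnw. destruct (T_closed w Hw Hnw) as [k Hk].
    destruct (Hp k 0%nat) as [K2 [T2 [P2 _]]].
    apply Tstar_iff in T2 as [v [Hv Pv]].
    apply (Hk v (T_in_Sigma v Hv)); auto.
    pose proof (prefw_prefl _ _ _ P2 Pv) as Q. unfold prefw in Q.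
    rewrite pre_length in Q. rewrite Q. auto. }
  (* ... so it is cut by [Ic], contradicting escape. *)
  destruct (Hcov w HwT) as [J [HJ PJ]].
  destruct (Hp (length J) 0%nat) as [K2 [_ [P2 [_ H2]]]].
  apply (H2 J HJ). unfold prefw in PJ. rewrite <- PJ. auto.
Qed.

Lemma cut_below_deep_word n I Ic m K : cutset T n I Ic ->
  (forall K, Tstar T K -> length K = m -> exists K', Ic K' /\ prefl K' K) ->
  Tstar T K -> prefl I K -> (m <= length K)%nat -> exists J, Ic (I ++ J) /\ prefl (I ++ J) K.
Proof.
  intros HC Hm TK PI LK. apply Tstar_iff in TK as [w [Hw Pw]].
  destruct (Hm _ (Tstar_pre w m Hw) (pre_length w m)) as [K' [HK' PK']].
  assert (Px : prefl K' K).
  { eapply prefl_trans; [eauto|]. unfold prefw in Pw. rewrite <- Pw. apply prefl_pre; auto. }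
  destruct (cut_extends n I Ic K' K HC HK' Px PI) as [J ->]. exists J; auto.
Qed.

Section PartA.
(* A positive weight [rho] (later [r_I^s]) satisfying the level condition (T3). *)
Variable rho : list nat -> R.
Hypothesis rho_pos : forall K, 0 < rho K.
Hypothesis rho_levels : forall I n, Tstar T I ->
  psum (fun J => length J = n /\ Tstar T (I ++ J)) (fun J => rho (I ++ J)) (rho I).

Definition restrictT (K : list nat) : R :=
  if excluded_middle_informative (Tstar T K) then rho K else 0.

Lemma restrictT_in K : Tstar T K -> restrictT K = rho K.
Proof. unfold restrictT. destruct (excluded_middle_informative _); tauto. Qed.

Lemma restrictT_out K : ~ Tstar T K -> restrictT K = 0.
Proof. unfold restrictT. destruct (excluded_middle_informative _); tauto. Qed.

Lemma restrictT_nonneg K : 0 <= restrictT K.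
Proof. unfold restrictT. destruct (excluded_middle_informative _); [left; auto|lra]. Qed.

Lemma restrictT_support K : restrictT K <> 0 -> Tstar T K.
Proof. intros H. apply NNPP. intro nT. apply H, restrictT_out, nT. Qed.

(* The one-letter case of (T3) is exactly additivity of [restrictT]. *)
Lemma restrictT_additive : additive N restrictT.
Proof.
  intros K. destruct (classic (Tstar T K)) as [TK|TK].
  - rewrite restrictT_in by auto.
    assert (P : psum (fun J => length J = 1%nat /\ Tstar T (K ++ J)) (fun J => rho (K ++ J))
              (fsum (fun J => restrictT (K ++ J)) (words N 1))).
    { apply psum_finite.
      - apply words_NoDup.
      - intros J [L HJ]. apply in_words. split; auto. intros i Hi.
        apply (Tstar_letters _ HJ). apply in_or_app; auto.
      - intros J _. apply restrictT_nonneg.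
      - intros J [_ HJ]. apply restrictT_in; auto.
      - intros J HJ HP. apply in_words in HJ as [L _]. apply restrictT_out.
        intro; apply HP; auto. }
    rewrite (psum_unique _ _ _ _ (rho_levels K 1 TK) P).
    change (words N 1) with (flat_map (fun J => map (fun j => J ++ [j]) (seq 0 N)) [[]]).
    rewrite fsum_flat_map. simpl. rewrite fsum_map. lra.
  - rewrite restrictT_out, <- (fsum_zero (seq 0 N)) by auto. apply fsum_ext.
    intros j _. symmetry. apply restrictT_out. intro H. apply TK.
    eapply Tstar_prefl; [eauto|apply prefl_app].
Qed.

Lemma restrictT_letters K : restrictT K <> 0 -> forall i, In i K -> (i < N)%nat.
Proof. intros H. apply Tstar_letters, restrictT_support, H. Qed.

(* Upper half of (T'3) with E = 1: a cut is an antichain above [I]. *)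
Lemma cut_partial_sums_le n I Ic l : Tstar T I -> cutset T n I Ic ->
  NoDup l -> (forall J, In J l -> Ic (I ++ J)) -> lsum (fun J => rho (I ++ J)) l <= rho I.
Proof.
  intros TI HC Hnd Hl. pose proof HC as [Hel _].
  rewrite lsum_fsum, (fsum_ext _ (fun J => restrictT (I ++ J))).
  2:{ intros J HJ. symmetry. apply restrictT_in, (Hel _ (Hl J HJ)). }
  rewrite <- (fsum_map restrictT (fun J => I ++ J)), <- (restrictT_in I TI).
  apply (antichain_bound N);
    [apply restrictT_additive|apply restrictT_nonneg|apply restrictT_letters|
     apply map_app_NoDup; auto| |].
  - intros a Ha. apply in_map_iff in Ha as [J [<- _]]. apply prefl_app.
  - intros a b Ha Hb. apply in_map_iff in Ha as [J1 [<- HJ1]].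
    apply in_map_iff in Hb as [J2 [<- HJ2]]. apply (cut_antichain n I Ic); auto.
Qed.

(* Lower half: by König's lemma the cut lies below a finite level [k] of [I],
   and the level sum of [I] at depth [k] is dominated by the finite sum over the cut. *)
Lemma cut_finite_sum_ge n I Ic : Tstar T I -> cutset T n I Ic ->
  exists B, NoDup B /\ (forall J, In J B -> Ic (I ++ J)) /\
    rho I <= lsum (fun J => rho (I ++ J)) B.
Proof.
  intros TI HC. pose proof HC as [Hel [Hcov _]].
  destruct (cut_finite_depth Ic) as [m Hm].
  { intros w Hw. destruct (Hcov w Hw) as [J [HJ [PJ _]]]. exists J; auto. }
  set (k := (Nat.max m (length I) - length I)%nat).
  set (B := filter (fun J => asbool (Ic (I ++ J))) (flat_map (words N) (seq 0 (S k)))).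
  exists B. split; [|split].
  { apply NoDup_filter, NoDup_flat_map_disjoint; [apply seq_NoDup|intros; apply words_NoDup|].
    intros a c y _ _ H1 H2. apply in_words in H1 as [L1 _]. apply in_words in H2 as [L2 _].
    congruence. }
  { intros J HJ. apply filter_In in HJ as [_ HJ]. apply asbool_true; auto. }
  (* [rho I] is the level sum at depth [k]; each word at that depth lies below a
     member [J''] of [B], whose own level sum is at most [rho (I J'')]. *)
  rewrite lsum_fsum, <- (restrictT_in I TI), <- (level_sum N restrictT restrictT_additive k I).
  apply Rle_trans with (fsum (fun J => restrictT (I ++ J)) B);
    [|apply fsum_le; intros J HJ; apply filter_In in HJ as [_ HJ];
      apply asbool_true, Hel in HJ as [HJ _]; rewrite restrictT_in; auto; lra].
  rewrite <- (fsum_map restrictT (fun J => I ++ J)).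
  apply Rle_trans with (fsum restrictT (flat_map (fun J'' => map (fun J3 => I ++ J'' ++ J3)
      (words N (k - length J''))) B)).
  2:{ rewrite fsum_flat_map. apply Req_le. apply fsum_ext. intros J'' _. rewrite fsum_map.
      rewrite <- (level_sum N restrictT restrictT_additive (k - length J'') (I ++ J'')).
      apply fsum_ext. intros; rewrite app_assoc; auto. }
  apply (fsum_incl word_eq_dec); [apply map_app_NoDup, words_NoDup|
                                  intros; apply restrictT_nonneg|].
  intros y Hy Hnz. apply in_map_iff in Hy as [J [<- HJ]]. apply in_words in HJ as [LJ _].
  destruct (cut_below_deep_word n I Ic m (I ++ J) HC Hm (restrictT_support _ Hnz)
              (prefl_app _ _)) as [J'' [HK' [J3 E]]]; [rewrite length_app; lia|].
  rewrite <- app_assoc in E. apply app_inv_head in E.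
  assert (LE : length J = (length J'' + length J3)%nat) by (rewrite E, length_app; auto).
  apply in_flat_map. exists J''. split.
  - apply filter_In. split; [|apply asbool_true; auto].
    apply in_flat_map. exists (length J''). split; [apply in_seq; lia|].
    apply in_words. split; auto. intros i Hi.
    apply (Tstar_letters (I ++ J'')); [apply (Hel _ HK')|apply in_or_app; auto].
  - apply in_map_iff. exists J3. split; [rewrite E; auto|].
    apply in_words. split; [lia|]. intros i Hi. apply (restrictT_letters _ Hnz).
    rewrite E. apply in_or_app; right; apply in_or_app; auto.
Qed.

Lemma cut_sum n I Ic : Tstar T I -> cutset T n I Ic ->
  psum (fun J => Ic (I ++ J)) (fun J => rho (I ++ J)) (rho I).
Proof.
  intros TI HC. split.
  - intros y [l [Hnd [Hl ->]]]. apply (cut_partial_sums_le n I Ic); auto.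
  - intros b Hb. destruct (cut_finite_sum_ge n I Ic TI HC) as [B [Hnd [HB Hle]]].
    apply Rle_trans with (lsum (fun J => rho (I ++ J)) B); auto.
    apply Hb. exists B. auto.
Qed.
End PartA.

Section PartB.
Variable rho : list nat -> R.
Hypothesis rho_pos : forall K, 0 < rho K.

(** The infimum of their
    [rho]-costs is a finitely additive "net measure" in the limit [n -> oo]. *)
Definition cover n I (l : list (list nat)) : Prop :=
  (forall K, In K l -> Tstar T K /\ prefl I K /\ (n <= length K)%nat) /\
  (forall w, T w -> prefw I w -> exists K, In K l /\ prefw K w).

Definition cover_cost n I (y : R) : Prop := exists l, cover n I l /\ y = fsum rho l.

Definition cover_inf n I : R := epsilon (inhabits 0) (is_inf (cover_cost n I)).

Lemma level_cover n I k : (n <= length I + k)%nat -> cover n I (map (fun J => I ++ J) (level I k)).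
Proof.
  intros Hn. split.
  - intros K HK. apply in_map_iff in HK as [J [<- HJ]]. apply in_level in HJ as [TJ LJ].
    split; auto. split; [apply prefl_app|]. rewrite length_app. lia.
  - intros w Hw PI. set (K := pre w (length I + k)).
    assert (PK : prefl I K).
    { apply (prefw_comparable I K w); auto; [apply prefw_pre|unfold K; rewrite pre_length; lia]. }
    exists K. split; [|apply prefw_pre].
    destruct PK as [J EJ]. rewrite EJ. apply in_map, in_level. rewrite <- EJ. split.
    + apply Tstar_pre; auto.
    + apply (f_equal (@length nat)) in EJ. unfold K in EJ.
      rewrite pre_length, length_app in EJ. lia.
Qed.

Lemma cover_inf_spec n I : is_inf (cover_cost n I) (cover_inf n I).
Proof.
  unfold cover_inf. apply epsilon_spec, inf_exists.
  - eexists. exists (map (fun J => I ++ J) (level I (n - length I))).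
    split; [apply level_cover; lia|reflexivity].
  - intros y [l [_ ->]]. apply fsum_nonneg. intros; left; auto.
Qed.

Lemma cover_inf_le n I l : cover n I l -> cover_inf n I <= fsum rho l.
Proof. intros H. apply (cover_inf_spec n I). exists l. auto. Qed.

Lemma cover_inf_nonneg n I : 0 <= cover_inf n I.
Proof.
  apply (cover_inf_spec n I). intros y [l [_ ->]]. apply fsum_nonneg. intros; left; auto.
Qed.

(* Outside [T^*] the empty family is a cover. *)
Lemma cover_inf_out n I : ~ Tstar T I -> cover_inf n I = 0.
Proof.
  intros nT. apply Rle_antisym; [|apply cover_inf_nonneg].
  apply (cover_inf_le n I []). split.
  - intros K [].
  - intros w Hw P. exfalso. apply nT. apply Tstar_iff. eauto.
Qed.

(* Longer words make fewer covers. *)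
Lemma cover_inf_mono n I : cover_inf n I <= cover_inf (S n) I.
Proof.
  apply (cover_inf_spec (S n) I). intros y [l [[Hel Hcov] ->]].
  apply cover_inf_le. split; auto.
  intros K HK. destruct (Hel K HK) as [? [? ?]]. repeat split; auto; lia.
Qed.

Lemma glue_child_covers n I e : 0 < e -> forall M, (M <= N)%nat -> exists l,
  (forall K, In K l -> Tstar T K /\ prefl I K /\ (n <= length K)%nat) /\
  (forall w, T w -> prefw I w -> (w (length I) < M)%nat -> exists K, In K l /\ prefw K w) /\
  fsum rho l <= fsum (fun j => cover_inf n (I ++ [j])) (seq 0 M) + INR M * e.
Proof.
  intros He. induction M as [|M IH]; intros HM.
  - exists []. split; [intros K []|]. split; [intros; lia|]. simpl; lra.
  - destruct (IH ltac:(lia)) as [l [H1 [H2 H3]]].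
    destruct (inf_approx _ _ e (cover_inf_spec n (I ++ [M])) He)
      as [y [[lM [[HM1 HM2] ->]] Hy]].
    exists (l ++ lM). split; [|split].
    + intros K HK. apply in_app_or in HK as [HK|HK]; auto.
      destruct (HM1 K HK) as [TK [PK LK]]. repeat split; auto.
      eapply prefl_trans; [apply prefl_app|eauto].
    + intros w Hw PI Hlt. destruct (Nat.eq_dec (w (length I)) M) as [E|ne].
      * destruct (HM2 w Hw) as [K [HK PK]].
        { unfold prefw in *. rewrite length_app. simpl.
          rewrite Nat.add_1_r, pre_S, PI, E. auto. }
        exists K. split; auto. apply in_or_app; auto.
      * destruct (H2 w Hw PI ltac:(lia)) as [K [HK PK]]. exists K. split; auto.
        apply in_or_app; auto.
    + rewrite fsum_app, seq_S, fsum_app, S_INR. simpl. lra.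
Qed.

Lemma cover_inf_subadditive n I :
  cover_inf n I <= fsum (fun j => cover_inf n (I ++ [j])) (seq 0 N).
Proof.
  apply (le_of_le_plus_eps _ _ (INR N) (pos_INR N)). intros e He.
  destruct (glue_child_covers n I e He N (le_n N)) as [l [H1 [H2 H3]]].
  apply Rle_trans with (fsum rho l); auto.
  apply cover_inf_le. split; auto.
  intros w Hw PI. apply H2; auto. apply T_in_Sigma; auto.
Qed.

(* Conversely a cover of [I] by words longer than [I] splits, according to the
   letter following [I], into covers of the children. *)
Lemma cover_inf_superadditive n I : (length I < n)%nat ->
  fsum (fun j => cover_inf n (I ++ [j])) (seq 0 N) <= cover_inf n I.
Proof.
  intros Hn. apply (cover_inf_spec n I). intros y [l [[Hel Hcov] ->]].
  rewrite (fsum_partition rho (length I) N l).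
  2:{ intros K HK. destruct (Hel K HK) as [TK [_ LK]].
      apply (Tstar_letters K TK). apply nth_In. lia. }
  apply fsum_le. intros j Hj. apply cover_inf_le. split.
  - intros K HK. apply filter_In in HK as [HK Ej]. apply Nat.eqb_eq in Ej.
    destruct (Hel K HK) as [TK [PK LK]]. repeat split; auto.
    apply prefl_snoc; auto. lia.
  - intros w Hw P. assert (PI : prefw I w) by (eapply prefw_prefl; [apply prefl_app|eauto]).
    destruct (Hcov w Hw PI) as [K [HK PK]]. exists K. split; auto.
    apply filter_In. split; auto. apply Nat.eqb_eq.
    destruct (Hel K HK) as [_ [_ LK]].
    unfold prefw in PK, P. rewrite <- PK. rewrite nth_pre by lia.
    assert (Q : nth (length I) (I ++ [j]) 0%nat = j) by apply nth_middle.
    rewrite <- P in Q at 1. rewrite nth_pre in Q; auto. rewrite length_app. simpl. lia.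
Qed.

Lemma cover_inf_additive n I : (length I < n)%nat ->
  cover_inf n I = fsum (fun j => cover_inf n (I ++ [j])) (seq 0 N).
Proof.
  intros Hn. apply Rle_antisym; [apply cover_inf_subadditive|apply cover_inf_superadditive; auto].
Qed.

Lemma level_cut n I k : Tstar T I -> (n <= length I + k)%nat ->
  cutset T n I (fun K => Tstar T K /\ length K = (length I + k)%nat).
Proof.
  intros TI Hk. split; [|split].
  - intros J [TJ LJ]. split; auto. lia.
  - intros w Hw. exists (pre w (length I + k)).
    split; [split; [apply Tstar_pre; auto|apply pre_length]|].
    split; [apply prefw_pre|]. intros J' [_ LJ'] P'. apply (prefw_same_length _ _ w); auto.
    apply prefw_pre. rewrite pre_length; auto.
  - apply Tstar_iff in TI as [w [Hw PI]]. exists (pre w (length I + k)).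
    split; [split; [apply Tstar_pre; auto|apply pre_length]|].
    apply (prefw_comparable I _ w); auto; [apply prefw_pre|rewrite pre_length; lia].
Qed.

Lemma minimal_prefix (l : list (list nat)) w : (exists K, In K l /\ prefw K w) ->
  exists K, In K l /\ prefw K w /\ forall K', In K' l -> prefl K' K -> K' = K.
Proof.
  intros [K0 [H0 P0]].
  assert (G : forall len K, In K l -> prefw K w -> (length K <= len)%nat ->
    exists K, In K l /\ prefw K w /\ forall K', In K' l -> prefl K' K -> K' = K).
  { induction len as [|len IH]; intros K HK PK LK;
      (destruct (classic (exists K', In K' l /\ prefl K' K /\ K' <> K))
        as [[K' [HK' [P' ne]]]|Hno];
       [assert (length K' < length K)%nat by
          (pose proof (prefl_len _ _ P'); destruct (Nat.eq_dec (length K') (length K));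
           [exfalso; apply ne; symmetry; apply prefl_eq; auto; lia|lia])
       |exists K; repeat split; auto; intros K' HK' P'; apply NNPP; intro ne; apply Hno; eauto]).
    - lia.
    - apply (IH K'); auto; [eapply prefw_prefl; eauto|lia]. }
  eapply G; eauto.
Qed.

(* A cover of [I] becomes a cut of [T^n_I] after keeping its minimal members and
   adding the words of length [max n |I|] of [T^*] that do not extend [I]. *)
Definition cover_cut (l : list (list nat)) n I K : Prop :=
  (In K l /\ forall K', In K' l -> prefl K' K -> K' = K) \/
  (Tstar T K /\ length K = Nat.max n (length I) /\ ~ prefl I K).

Lemma cover_cut_cutset n I l : Tstar T I -> cover n I l -> cutset T n I (cover_cut l n I).
Proof.
  intros TI [Hel Hcov]. set (m := Nat.max n (length I)). split; [|split].
  - intros K [[HK _]|[TK [LK _]]].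
    + destruct (Hel K HK) as [? [? ?]]; auto.
    + split; auto. lia.
  - intros w Hw. destruct (classic (prefw I w)) as [PI|nPI].
    + destruct (minimal_prefix l w (Hcov w Hw PI)) as [K [HK [PK Hmin]]].
      exists K. split; [left; auto|]. split; auto.
      intros J' [[HJ' Hmin']|[_ [LJ' nP]]] PJ'.
      * destruct (Nat.le_ge_cases (length J') (length K)).
        -- apply Hmin; auto. apply (prefw_comparable _ _ w); auto.
        -- symmetry. apply Hmin'; auto. apply (prefw_comparable _ _ w); auto.
      * exfalso. apply nP. apply (prefw_comparable _ _ w); auto. lia.
    + exists (pre w m). split.
      { right. split; [apply Tstar_pre; auto|split; [apply pre_length|]].
        intros P. apply nPI. eapply prefw_prefl; eauto. apply prefw_pre. }
      split; [apply prefw_pre|].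
      intros J' [[HJ' _]|[_ [LJ' _]]] PJ'.
      * exfalso. apply nPI. destruct (Hel J' HJ') as [_ [P _]]. eapply prefw_prefl; eauto.
      * apply (prefw_same_length _ _ w); auto; [apply prefw_pre|rewrite pre_length; auto].
  - apply Tstar_iff in TI as [w [Hw PI]].
    destruct (minimal_prefix l w (Hcov w Hw PI)) as [K [HK [PK Hmin]]].
    exists K. split; [left; auto|]. apply (Hel K HK).
Qed.

Definition cover_lim I : R := epsilon (inhabits 0) (is_sup_seq (fun n => cover_inf n I)).

Section Comparable.
Variable E : R.
Hypothesis rho_cuts : forall I n Ic, Tstar T I -> cutset T n I Ic ->
  exists S, psum (fun J => Ic (I ++ J)) (fun J => rho (I ++ J)) S /\
    / E * rho I <= S /\ S <= E * rho I.

(* The level cut is a cover, so [cover_inf] is at most [E rho I]. *)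
Lemma cover_inf_upper n I : Tstar T I -> cover_inf n I <= E * rho I.
Proof.
  intros TI. set (k := (n - length I)%nat).
  destruct (rho_cuts I n _ TI (level_cut n I k TI ltac:(lia))) as [S [[HS _] [_ HS2]]].
  apply Rle_trans with S; auto.
  apply Rle_trans with (fsum rho (map (fun J => I ++ J) (level I k))).
  - apply cover_inf_le, level_cover. lia.
  - rewrite fsum_map, <- lsum_fsum. apply HS. exists (level I k).
    split; [apply level_NoDup|split; auto].
    intros J HJ. apply in_level in HJ as [TJ LJ]. split; auto. rewrite length_app; lia.
Qed.

(* The part of the cut [cover_cut l n I] above [I] lies in [l], so every cover
   costs at least [E^-1 rho I]. *)
Lemma cover_inf_lower n I : Tstar T I -> / E * rho I <= cover_inf n I.
Proof.
  intros TI. apply (cover_inf_spec n I). intros y [l [Hl ->]].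
  destruct (rho_cuts I n _ TI (cover_cut_cutset n I l TI Hl)) as [S [[_ HS] [HS1 _]]].
  apply Rle_trans with S; auto. apply HS.
  intros y' [lj [Hnd [Hlj ->]]]. rewrite lsum_fsum, <- (fsum_map rho (fun J => I ++ J)).
  apply (fsum_incl word_eq_dec); [apply map_app_NoDup; auto|intros; left; auto|].
  intros K HK _. apply in_map_iff in HK as [J [<- HJ]].
  destruct (Hlj J HJ) as [[H _]|[_ [_ nP]]]; auto. exfalso; apply nP, prefl_app.
Qed.

Lemma cover_lim_spec I : is_sup_seq (fun n => cover_inf n I) (cover_lim I).
Proof.
  unfold cover_lim. apply epsilon_spec.
  destruct (classic (Tstar T I)) as [TI|nTI].
  - apply (sup_seq_exists _ (E * rho I)). intros n. apply cover_inf_upper; auto.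
  - apply (sup_seq_exists _ 0). intros n. rewrite cover_inf_out; auto. lra.
Qed.

Lemma cover_lim_out I : ~ Tstar T I -> cover_lim I = 0.
Proof.
  intros nT. apply (sup_seq_unique (fun n => cover_inf n I)); [apply cover_lim_spec|].
  eapply sup_seq_ext; [|apply sup_seq_const]. intros n. rewrite cover_inf_out; auto.
Qed.

Lemma cover_lim_bounds I : Tstar T I -> / E * rho I <= cover_lim I <= E * rho I.
Proof.
  intros TI. destruct (cover_lim_spec I) as [Hub Happ]. split.
  - apply Rle_trans with (cover_inf 0 I); auto. apply cover_inf_lower; auto.
  - apply Rnot_lt_le. intro Hl. destruct (Happ (cover_lim I - E * rho I)) as [n Hn]; [lra|].
    pose proof (cover_inf_upper n I TI). lra.
Qed.

(* [cover_inf n] is additive at every [I] shorter than [n]; pass to the limit. *)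
Lemma cover_lim_additive : additive N cover_lim.
Proof.
  intros I. set (k := S (length I)).
  assert (Hmono : forall J, nondecr (fun n => cover_inf n J)) by (intros J n; apply cover_inf_mono).
  apply (sup_seq_unique (fun n => cover_inf (n + k) I)).
  - apply (sup_seq_shift (fun n => cover_inf n I)); auto. apply cover_lim_spec.
  - eapply sup_seq_ext.
    + intros n. symmetry. apply cover_inf_additive. unfold k. lia.
    + apply (sup_seq_fsum (fun j n => cover_inf (n + k) (I ++ [j]))).
      * intros j n. apply cover_inf_mono.
      * intros j. apply (sup_seq_shift (fun n => cover_inf n (I ++ [j]))); auto.
        apply cover_lim_spec.
Qed.
End Comparable.
End PartB.
End Tree.

Lemma Rpower_pos a b : 0 < Rpower a b.
Proof. unfold Rpower. apply exp_pos. Qed.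

Lemma Rpower_inv_pow u s : 0 < u -> 0 < s -> Rpower (Rpower u (/ s)) s = u.
Proof. intros Hu Hs. rewrite Rpower_mult, Rinv_l by lra. apply Rpower_1; auto. Qed.

Lemma root_bounds E s u v : 0 < E -> 0 < s -> 0 < u ->
  / E * Rpower u s <= v <= E * Rpower u s ->
  Rpower E (- / s) * u <= Rpower v (/ s) <= Rpower E (/ s) * u.
Proof.
  intros HE Hs Hu [Hlo Hup].
  assert (Hroot : forall c, 0 < c -> Rpower (c * Rpower u s) (/ s) = Rpower c (/ s) * u).
  { intros c Hc. rewrite <- Rpower_mult_distr by (auto; apply Rpower_pos).
    rewrite Rpower_mult, Rinv_r, Rpower_1 by lra. auto. }
  assert (Hinv : 0 < / E) by (apply Rinv_0_lt_compat; auto).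
  assert (Hv : 0 < v) by (pose proof (Rpower_pos u s); nra).
  split.
  - replace (Rpower E (- / s)) with (Rpower (/ E) (/ s))
      by (unfold Rpower; rewrite ln_Rinv by auto; f_equal; ring).
    rewrite <- Hroot by auto. apply Rle_Rpower_l; [left; apply Rinv_0_lt_compat; auto|].
    split; auto. apply Rmult_lt_0_compat; [|apply Rpower_pos]; auto.
  - rewrite <- Hroot by auto. apply Rle_Rpower_l; [left; apply Rinv_0_lt_compat; auto|lra].
Qed.

Lemma T3_of_additive N T (T_in_Sigma : forall w, T w -> inSigma N w) (g : list nat -> R) s :
  0 < s -> additive N g -> (forall I, ~ Tstar T I -> g I = 0) ->
  (forall I, Tstar T I -> 0 < g I) -> T3 T (fun K => Rpower (g K) (/ s)) s.
Proof.
  intros Hs Hadd Hout Hin I n TI.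
  rewrite Rpower_inv_pow, <- (level_sum N g Hadd n I) by auto.
  apply psum_finite.
  - apply words_NoDup.
  - intros J [LJ TJ]. apply in_words. split; auto. intros i Hi.
    apply (Tstar_letters N T T_in_Sigma _ TJ). apply in_or_app; auto.
  - intros J _. destruct (classic (Tstar T (I ++ J))) as [H|H];
      [left; apply Hin|rewrite Hout]; auto; lra.
  - intros J [_ TJ]. symmetry. apply Rpower_inv_pow; auto.
  - intros J HJ HP. apply in_words in HJ as [LJ _]. apply Hout. intro; apply HP; auto.
Qed.

Section Comparable_radii.
Variables (N : nat) (T : (nat -> nat) -> Prop) (X : Type) (d : X -> X -> R) (x : list nat -> X).
Variables (r rt : list nat -> R) (a b : R).
Hypotheses (a_pos : 0 < a) (b_pos : 0 < b).
Hypothesis rt_lower : forall I, Tstar T I -> a * r I <= rt I.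
Hypothesis rt_upper : forall I, Tstar T I -> rt I <= b * r I.

Lemma T1_comparable C : 0 < C -> T1 T X d x r C -> T1 T X d x rt (C / b).
Proof.
  intros HC H1 I J TI TJ Hinc. pose proof (H1 I J TI TJ Hinc).
  pose proof (rt_upper I TI). pose proof (rt_upper J TJ).
  apply Rle_ge. apply Rle_trans with (C * (r I + r J)); [|lra].
  unfold Rdiv. rewrite Rmult_assoc. apply Rmult_le_compat_l; [lra|].
  apply Rmult_le_reg_l with b; auto. rewrite <- Rmult_assoc, Rinv_r by lra. lra.
Qed.

Lemma T2_comparable D : 0 < D -> T2 T X d x r D -> T2 T X d x rt (D / a).
Proof.
  intros HD H2 I J1 J2 TI T1' T2'. pose proof (H2 I J1 J2 TI T1' T2').
  pose proof (rt_lower I TI). apply Rle_trans with (D * r I); auto.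
  unfold Rdiv. rewrite Rmult_assoc. apply Rmult_le_compat_l; [lra|].
  apply Rmult_le_reg_l with a; auto. rewrite <- Rmult_assoc, Rinv_r by lra. lra.
Qed.

Lemma T4_comparable : T4 T r -> T4 T rt.
Proof.
  intros H4 eps Heps. destruct (H4 (eps / b)) as [n Hn]; [apply Rdiv_lt_0_compat; auto|].
  exists n. intros I TI LI. pose proof (Hn I TI LI). pose proof (rt_upper I TI).
  apply Rle_lt_trans with (b * r I); auto.
  replace eps with (b * (eps / b)) by (field; lra). apply Rmult_lt_compat_l; auto.
Qed.

Lemma T5_comparable rho : 0 < rho -> T5 T r N rho -> T5 T rt N (rho * a / b).
Proof.
  intros Hrho H5 I j Hj TIj. assert (TI : Tstar T I) by (eapply Tstar_prefl; [eauto|apply prefl_app]).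
  pose proof (H5 I j Hj TIj). pose proof (rt_lower _ TIj). pose proof (rt_upper I TI).
  apply Rle_ge. apply Rle_trans with (a * r (I ++ [j])); auto.
  apply Rle_trans with (a * (rho * r I)); [|apply Rmult_le_compat_l; lra].
  replace (rho * a / b * rt I) with (a * (rho * (rt I / b))) by (field; lra).
  apply Rmult_le_compat_l; [lra|]. apply Rmult_le_compat_l; [lra|].
  apply Rmult_le_reg_l with b; auto. replace (b * (rt I / b)) with (rt I) by (field; lra). lra.
Qed.

Lemma s_tree_comparable s rho C D : 0 < rho -> 0 < C -> 0 < D ->
  T1 T X d x r C -> T2 T X d x r D -> T4 T r -> T5 T r N rho ->
  (forall I, Tstar T I -> 0 < rt I) -> T3 T rt s -> s_tree T X d x rt s N.
Proof.
  intros Hrho HC HD H1 H2 H4 H5 Hpos H3. split; auto.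
  exists (rho * a / b), (C / b), (D / a).
  split; [apply Rdiv_lt_0_compat; [apply Rmult_lt_0_compat|]; auto|].
  split; [apply Rdiv_lt_0_compat; auto|]. split; [apply Rdiv_lt_0_compat; auto|].
  split; [apply T1_comparable; auto|]. split; [apply T2_comparable; auto|].
  split; [exact H3|]. split; [apply T4_comparable; auto|].
  - apply T5_comparable; auto.
Qed.
End Comparable_radii.

Theorem mainTheorem6 (N : nat) (T : (nat -> nat) -> Prop) (X : Type)
  (d : X -> X -> R) (x : list nat -> X) (r : list nat -> R) (s : R) :
  is_metric d ->
  (forall w, T w -> inSigma N w) ->
  (exists w, T w) ->
  closedT N T ->
  0 < s ->
  (forall I, Tstar T I -> 0 < r I) ->
  (s_tree T X d x r s N -> T'3 T r s 1) /\
  (forall rho C D E, 0 < rho -> 0 < C -> 0 < D -> 0 < E ->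
     T1 T X d x r C -> T2 T X d x r D -> T'3 T r s E -> T4 T r -> T5 T r N rho ->
     exists rt : list nat -> R,
       (forall I, Tstar T I ->
          Rpower E (- / s) * r I <= rt I /\ rt I <= Rpower E (/ s) * r I) /\
       s_tree T X d x rt s N).
Proof.
  intros _ T_in_Sigma _ T_closed Hs Hr.
  set (w := fun K => Rpower (r K) s).
  assert (w_pos : forall K, 0 < w K) by (intros; apply Rpower_pos).
  split.
  -
    intros [_ [_ [_ [_ [_ [_ [_ [_ [_ [H3 _]]]]]]]]]] I n Ic TI HC.
    exists (w I). rewrite Rinv_1, !Rmult_1_l.
    split; [apply (cut_sum N T T_in_Sigma T_closed w w_pos H3 n I Ic TI HC)|unfold w; lra].
  - (* (b): the new radii are the [s]-th roots of the limit of cover infima *)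
    intros rho C D E Hrho HC HD HE H1 H2 H'3 H4 H5.
    set (g := cover_lim T w).
    assert (g_bounds : forall I, Tstar T I -> / E * w I <= g I <= E * w I)
      by exact (cover_lim_bounds N T T_in_Sigma w w_pos E H'3).
    assert (g_pos : forall I, Tstar T I -> 0 < g I).
    { intros I TI. pose proof (g_bounds I TI). pose proof (w_pos I).
      pose proof (Rinv_0_lt_compat E HE). nra. }
    set (rt := fun K => Rpower (g K) (/ s)).
    assert (rt_bounds : forall I, Tstar T I ->
              Rpower E (- / s) * r I <= rt I <= Rpower E (/ s) * r I)
      by (intros I TI; apply root_bounds, g_bounds; auto).
    exists rt. split; [exact rt_bounds|].
    apply (s_tree_comparable N T X d x r rt _ _ (Rpower_pos E (- / s)) (Rpower_pos E (/ s))
             (fun I TI => proj1 (rt_bounds I TI)) (fun I TI => proj2 (rt_bounds I TI))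
             s rho C D); auto.
    { intros I TI. apply Rpower_pos. }
    apply (T3_of_additive N T T_in_Sigma g s Hs).
    + apply (cover_lim_additive N T T_in_Sigma w w_pos E H'3).
    + apply (cover_lim_out N T T_in_Sigma w w_pos E H'3).
    + exact g_pos.
Qed.
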